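(* Let $F\colon\mathsf{Nom}\to\mathsf{Nom}$ be $FX=1+\mathbb{A}\times X+[\mathbb{A}]X$. The initial $F$-algebra is the nominal set $\overline{\mathbb{A}}^*/{=_\alpha}$ of bar strings modulo $\alpha$-equivalence with the structure $\iota$ given by $\iota( * )=[\varepsilon]_\alpha$, $\iota(a,[w]_\alpha)=[aw]_\alpha$ and $\iota(\langle a\rangle[w]_\alpha)=[\mathord{|}a\,w]_\alpha$.
   Context: Fix a countably infinite set $\mathbb{A}$ of names; $\mathsf{Nom}$ is the category of nominal sets (sets with an action of the group of finite permutations of $\mathbb{A}$ in which each element $x$ has a least finite support $\mathrm{supp}(x)$; $a$ is fresh for $x$, $a\#x$, if $a\notin\mathrm{supp}(x)$) and equivariant maps. $[\mathbb{A}]X$ is the quotient of $\mathbb{A}\times X$ by $(a,x)\sim(b,y)$ iff $(a\,c)\cdot x=(b\,c)\cdot y$ for some fresh $c$, classes written $\langle a\rangle x$. Bar strings are finite words over $\overline{\mathbb{A}}=\mathbb{A}\cup\{\mathord{|}a: a\in\mathbb{A}\}$, with pointwise action; $\mathord{|}a$ binds $a$ to its right. $=_\alpha$ is the least equivalence relation on $\overline{\mathbb{A}}^*$ with $x\,\mathord{|}a\,v=_\alpha x\,\mathord{|}b\,w$ for all $a,b\in\mathbb{A}$, $x,v,w\in\overline{\mathbb{A}}^*$ with $\langle a\rangle v=\langle b\rangle w$ in $[\mathbb{A}]\overline{\mathbb{A}}^*$ (equivalently: $a=b$ and $v=w$, or $b\#v$ and $(a\,b)\cdot v=w$). $[w]_\alpha$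 is the class of $w$; $\overline{\mathbb{A}}^*/{=_\alpha}$ is a nominal set with $\pi\cdot[w]_\alpha=[\pi\cdot w]_\alpha$. *)

(* Nominal sets over the atoms A := nat. *)
From Stdlib Require Import List Arith ClassicalEpsilon.
From Stdlib Require Import Relations.Relation_Operators.
Import ListNotations.

Record perm := Perm {
  pf : nat -> nat;
  pinv : nat -> nat;
  pfK : forall a, pinv (pf a) = a;
  pinvK : forall a, pf (pinv a) = a;
  pfin : exists l : list nat, forall a, ~ In a l -> pf a = a }.

Definition pid : perm.
Proof.
  refine (Perm (fun a => a) (fun a => a) (fun a => eq_refl) (fun a => eq_refl) _).
  exists nil; auto.
Defined.

Definition pcomp (p q : perm) : perm.
Proof.
  refine (Perm (fun a => pf p (pf q a)) (fun a => pinv q (pinv p a)) _ _ _).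
  - intro a; rewrite pfK, pfK; reflexivity.
  - intro a; rewrite pinvK, pinvK; reflexivity.
  - destruct (pfin p) as [l Hl]; destruct (pfin q) as [m Hm].
    exists (l ++ m); intros a Ha.
    rewrite Hm, Hl; auto; intro H; apply Ha; apply in_or_app; auto.
Defined.

Definition swapf (a b x : nat) : nat :=
  if Nat.eqb x a then b else if Nat.eqb x b then a else x.

Lemma swapfK a b x : swapf a b (swapf a b x) = x.
Proof.
  unfold swapf.
  destruct (Nat.eqb x a) eqn:Ea; destruct (Nat.eqb x b) eqn:Eb;
  repeat match goal with
  | H : Nat.eqb _ _ = true |- _ => apply Nat.eqb_eq in H; subst
  | H : Nat.eqb _ _ = false |- _ => apply Nat.eqb_neq in H
  end;
  repeat (match goal with |- context [Nat.eqb ?u ?v] =>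
            destruct (Nat.eqb_spec u v) end; subst); congruence.
Qed.

Definition pswap (a b : nat) : perm.
Proof.
  refine (Perm (swapf a b) (swapf a b) (swapfK a b) (swapfK a b) _).
  exists [a; b]; intros x Hx; unfold swapf.
  destruct (Nat.eqb_spec x a); [subst; simpl in Hx; tauto|].
  destruct (Nat.eqb_spec x b); [subst; simpl in Hx; tauto|]; reflexivity.
Defined.

Section Nominal.
Variable X : Type.
Variable act : perm -> X -> X.

Definition supports (S : list nat) (x : X) : Prop :=
  forall p : perm, (forall a, In a S -> pf p a = a) -> act p x = x.

Definition least_supp (S : list nat) (x : X) : Prop :=
  supports S x /\ forall S', supports S' x -> incl S S'.

Definition fresh (a : nat) (x : X) : Prop :=
  exists S, least_supp S x /\ ~ In a S.

Definition is_nominal : Prop :=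
  (forall x, act pid x = x) /\
  (forall p q x, act (pcomp p q) x = act p (act q x)) /\
  (forall x, exists S, least_supp S x).

Definition abs_rel (u v : nat * X) : Prop :=
  let (a, x) := u in let (b, y) := v in
  exists c, c <> a /\ c <> b /\ fresh c x /\ fresh c y /\
            act (pswap a c) x = act (pswap b c) y.
End Nominal.

Arguments supports {X} act S x.
Arguments least_supp {X} act S x.
Arguments fresh {X} act a x.
Arguments is_nominal {X} act.
Arguments abs_rel {X} act u v.

Definition equivariant {X Y : Type} (actX : perm -> X -> X) (actY : perm -> Y -> Y)
  (f : X -> Y) : Prop :=
  forall p x, f (actX p x) = actY p (f x).

Definition quot {X : Type} (R : X -> X -> Prop) : Type :=
  { P : X -> Prop | exists x, P = R x }.

Definition cls {X : Type} (R : X -> X -> Prop) (x : X) : quot R :=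
  exist _ (R x) (ex_intro _ x eq_refl).

Definition rep {X : Type} {R : X -> X -> Prop} (c : quot R) : X :=
  proj1_sig (constructive_indefinite_description _ (proj2_sig c)).

Definition absT (X : Type) (act : perm -> X -> X) : Type := quot (abs_rel act).

Definition abs_cls {X : Type} (act : perm -> X -> X) (a : nat) (x : X) : absT X act :=
  cls (abs_rel act) (a, x).

Definition FT (X : Type) (act : perm -> X -> X) : Type :=
  (unit + (nat * X) + absT X act)%type.

Definition actF {X : Type} (act : perm -> X -> X) (p : perm) (u : FT X act) : FT X act :=
  match u with
  | inl (inl t) => inl (inl t)
  | inl (inr (a, x)) => inl (inr (pf p a, act p x))
  | inr c => let (a, x) := rep c in inr (abs_cls act (pf p a) (act p x))
  end.

Definition Fmap {X Y : Type} (actX : perm -> X -> X) (actY : perm -> Y -> Y)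
  (h : X -> Y) (u : FT X actX) : FT Y actY :=
  match u with
  | inl (inl t) => inl (inl t)
  | inl (inr (a, x)) => inl (inr (a, h x))
  | inr c => let (a, x) := rep c in inr (abs_cls actY a (h x))
  end.

Definition is_Fhom {X Y : Type} (actX : perm -> X -> X) (actY : perm -> Y -> Y)
  (alpha : FT X actX -> X) (beta : FT Y actY -> Y) (h : X -> Y) : Prop :=
  forall u, h (alpha u) = beta (Fmap actX actY h u).

Definition is_initial_Falg {X : Type} (actX : perm -> X -> X)
  (alpha : FT X actX -> X) : Prop :=
  is_nominal actX /\ equivariant (actF actX) actX alpha /\
  forall (Y : Type) (actY : perm -> Y -> Y) (beta : FT Y actY -> Y),
    is_nominal actY -> equivariant (actF actY) actY beta ->
    exists h : X -> Y,
      equivariant actX actY h /\ is_Fhom actX actY alpha beta h /\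
      forall h' : X -> Y, equivariant actX actY h' ->
        is_Fhom actX actY alpha beta h' -> forall x, h' x = h x.

Inductive barletter : Type :=
| Nm (a : nat)
| Bd (a : nat).    (* |a, binding a to its right *)

Definition bact (p : perm) (l : barletter) : barletter :=
  match l with Nm a => Nm (pf p a) | Bd a => Bd (pf p a) end.

Definition wact (p : perm) (w : list barletter) : list barletter := map (bact p) w.

Definition alpha_step (w1 w2 : list barletter) : Prop :=
  exists x a b v w, w1 = x ++ Bd a :: v /\ w2 = x ++ Bd b :: w /\
    abs_cls wact a v = abs_cls wact b w.

Definition alpha_eq : list barletter -> list barletter -> Prop :=
  clos_refl_sym_trans _ alpha_step.

Definition BarQ : Type := quot alpha_eq.

Definition bcls (w : list barletter) : BarQ := cls alpha_eq w.

Definition BarQ_act (p : perm) (c : BarQ) : BarQ := bcls (wact p (rep c)).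

Definition iota (u : FT BarQ BarQ_act) : BarQ :=
  match u with
  | inl (inl _) => bcls nil
  | inl (inr (a, c)) => bcls (Nm a :: rep c)
  | inr d => let (a, c) := rep d in bcls (Bd a :: rep c)
  end.

From Stdlib Require Import List Arith Lia.
From Stdlib Require Import FunctionalExtensionality PropExtensionality ProofIrrelevance ClassicalEpsilon.
From Stdlib Require Import Relations.Relation_Operators RelationClasses Setoid.
Import ListNotations.

(* The unique homomorphism into an algebra (Y, beta) is the fold of beta along bar
   strings: eps |-> beta( * ), a w |-> beta(a, h w), |a w |-> beta(<a>(h w)).  It is
   equivariant because beta is, and it respects =alpha because an equivariant map
   preserves freshness and so sends <a>v = <b>w to <a>(h v) = <b>(h w); uniqueness is
   induction on strings.  The nominal structure of the quotient rests on the free names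
   fn w: they are invariant under =alpha and form the least support of [w]alpha, the key
   renaming fact being |a v =alpha |c ((a c).v) whenever c is not free in v. *)

Ltac swapf_cases :=
  unfold swapf in *;
  repeat (match goal with
          | |- context [Nat.eqb ?u ?v] => is_var u; is_var v; destruct (Nat.eqb_spec u v)
          end; cbn beta iota);
  subst; try congruence.

Lemma perm_ext (p q : perm) : (forall a, pf p a = pf q a) -> p = q.
Proof.
  destruct p as [f g fK gK fin], q as [f' g' fK' gK' fin']; simpl; intro H.
  assert (f = f') by (apply functional_extensionality; auto). subst f'.
  assert (g = g').
  { apply functional_extensionality; intro a.
    transitivity (g (f (g' a))); [rewrite gK'; auto | apply fK]. }
  subst g'. f_equal; apply proof_irrelevance.
Qed.

Definition pinv_perm (p : perm) : perm.
Proof.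
  refine (Perm (pinv p) (pf p) (pinvK p) (pfK p) _).
  destruct (pfin p) as [l Hl]; exists l; intros a Ha.
  rewrite <- (Hl a Ha) at 1. apply pfK.
Defined.

Lemma pcomp_pinv_perm (p q : perm) : pcomp p (pcomp (pinv_perm p) q) = q.
Proof. apply perm_ext; intro a; simpl. apply pinvK. Qed.

Lemma pf_inj (p : perm) a b : pf p a = pf p b -> a = b.
Proof. intro H. rewrite <- (pfK p a), <- (pfK p b), H. reflexivity. Qed.

Lemma swapf_l a b : swapf a b a = b.
Proof. swapf_cases. Qed.

Lemma swapf_r a b : swapf a b b = a.
Proof. swapf_cases. Qed.

Lemma swapf_other a b x : x <> a -> x <> b -> swapf a b x = x.
Proof. intros. swapf_cases. Qed.

Lemma pswap_conj (p : perm) a c : pcomp (pswap (pf p a) (pf p c)) p = pcomp p (pswap a c).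
Proof.
  apply perm_ext; intro w; simpl. unfold swapf.
  destruct (Nat.eqb_spec w a) as [->|nwa]; [rewrite Nat.eqb_refl; reflexivity|].
  destruct (Nat.eqb_spec (pf p w) (pf p a)) as [e|_]; [apply pf_inj in e; congruence|].
  destruct (Nat.eqb_spec w c) as [->|nwc]; [rewrite Nat.eqb_refl; reflexivity|].
  destruct (Nat.eqb_spec (pf p w) (pf p c)) as [e|_]; [apply pf_inj in e; congruence|reflexivity].
Qed.

Lemma exists_fresh_nat (l : list nat) : exists c, ~ In c l.
Proof.
  exists (S (list_max l)). intro H.
  assert (Hmax : Forall (fun k => k <= list_max l) l) by (apply list_max_le; reflexivity).
  rewrite Forall_forall in Hmax. specialize (Hmax _ H). lia.
Qed.

Section Quotient.
Context {T : Type} (R : relation T).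

Lemma quot_eq (c d : quot R) : proj1_sig c = proj1_sig d -> c = d.
Proof. destruct c as [P HP], d as [Q HQ]; simpl; intros ->. f_equal; apply proof_irrelevance. Qed.

Lemma cls_rep (c : quot R) : cls R (rep c) = c.
Proof.
  apply quot_eq; simpl. unfold rep.
  destruct (constructive_indefinite_description _ _); simpl. auto.
Qed.

Lemma cls_eq `{Equivalence T R} u v : R u v -> cls R u = cls R v.
Proof.
  intro Huv. apply quot_eq; simpl.
  extensionality z. apply propositional_extensionality. rewrite Huv. reflexivity.
Qed.

Lemma cls_inj `{Reflexive T R} u v : cls R u = cls R v -> R u v.
Proof. intro E. apply (f_equal (@proj1_sig _ _)) in E; simpl in E. rewrite E. reflexivity. Qed.

Lemma rep_cls `{Equivalence T R} x : R (rep (cls R x)) x.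
Proof. apply cls_inj. apply cls_rep. Qed.

End Quotient.

Section Supports.
Context {X : Type} (act : perm -> X -> X).

Lemma fresh_iff_least_supp S x c : least_supp act S x -> fresh act c x <-> ~ In c S.
Proof.
  intro HS. split.
  - intros [S' [HS' Hc]] Hin. apply Hc, (proj2 HS S' (proj1 HS')), Hin.
  - intro Hc. exists S; auto.
Qed.

Lemma least_supp_intro S x : supports act S x ->
  (forall a b, In a S -> ~ In b S -> act (pswap a b) x <> x) -> least_supp act S x.
Proof.
  intros HS Hmove. split; [exact HS|]. intros S' HS' a Ha.
  destruct (in_dec Nat.eq_dec a S') as [|Ha']; [assumption|exfalso].
  destruct (exists_fresh_nat (a :: S' ++ S)) as [b Hb]; simpl in Hb.
  apply (Hmove a b Ha); [intro; apply Hb; right; apply in_or_app; auto|].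
  apply HS'. intros z Hz. simpl.
  apply swapf_other; intros ->; [contradiction|apply Hb; right; apply in_or_app; auto].
Qed.

Lemma abs_cls_surj (d : absT X act) : exists a x, d = abs_cls act a x.
Proof. rewrite <- (cls_rep _ d). destruct (rep d) as [a x]. exists a, x. reflexivity. Qed.

End Supports.

Section Nominal.
Context {X : Type} (act : perm -> X -> X).
Hypothesis Hnom : is_nominal act.

Lemma act_pcomp p q x : act (pcomp p q) x = act p (act q x).
Proof. apply Hnom. Qed.

Lemma supports_agree S x p q : supports act S x ->
  (forall a, In a S -> pf p a = pf q a) -> act p x = act q x.
Proof.
  intros HS Hpq. rewrite <- (pcomp_pinv_perm q p), act_pcomp. f_equal.
  apply HS. intros a Ha; simpl. rewrite Hpq by assumption. apply pfK.
Qed.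

Lemma supports_act S x p : supports act S x -> supports act (map (pf p) S) (act p x).
Proof.
  intros HS q Hq.
  rewrite <- act_pcomp, <- (pcomp_pinv_perm p (pcomp q p)), act_pcomp. f_equal.
  apply HS. intros a Ha; simpl. rewrite Hq by (apply in_map; assumption). apply pfK.
Qed.

Lemma fresh_of_supports S x c : supports act S x -> ~ In c S -> fresh act c x.
Proof.
  intros HS Hc. destruct (proj2 (proj2 Hnom) x) as [T HT].
  exists T. split; [exact HT|]. intro; apply Hc, (proj2 HT S HS); assumption.
Qed.

Lemma exists_fresh (l : list nat) (xs : list X) :
  exists c, ~ In c l /\ forall x, In x xs -> fresh act c x.
Proof.
  assert (exists L, forall x, In x xs -> supports act L x) as [L HL].
  { induction xs as [|x xs [L HL]]; [exists []; simpl; tauto|].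
    destruct (proj2 (proj2 Hnom) x) as [S [HS _]].
    exists (S ++ L). intros y [<-|Hy] p Hp.
    - apply HS. intros; apply Hp, in_or_app; auto.
    - apply (HL y Hy). intros; apply Hp, in_or_app; auto. }
  destruct (exists_fresh_nat (l ++ L)) as [c Hc].
  exists c. split; [intro; apply Hc, in_or_app; auto|].
  intros x Hx. apply (fresh_of_supports L); auto. intro; apply Hc, in_or_app; auto.
Qed.

(* (a c') and (c c')(a c) agree outside {c, c'}, hence on the least support of x. *)
Lemma act_pswap_rename a c c' x : fresh act c x -> fresh act c' x ->
  act (pswap a c') x = act (pswap c c') (act (pswap a c) x).
Proof.
  intros [S [HS Hc]] Hc'. rewrite (fresh_iff_least_supp act S x c' HS) in Hc'.
  rewrite <- act_pcomp. apply (supports_agree S); [apply HS|]. intros z Hz; simpl.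
  assert (z <> c) by (intros ->; auto). assert (z <> c') by (intros ->; auto).
  swapf_cases.
Qed.

Lemma abs_rel_any_fresh a x b y c : abs_rel act (a, x) (b, y) ->
  fresh act c x -> fresh act c y -> act (pswap a c) x = act (pswap b c) y.
Proof.
  intros [c0 (_ & _ & Fx & Fy & E)] Gx Gy.
  rewrite (act_pswap_rename a c0 c x), (act_pswap_rename b c0 c y), E; auto.
Qed.

Lemma abs_rel_equivalence : Equivalence (abs_rel act).
Proof.
  split.
  - intros [a x]. destruct (exists_fresh [a] [x]) as [c [Hc Hf]].
    exists c. simpl in Hc. assert (fresh act c x) by (apply Hf; simpl; auto). intuition.
  - intros [a x] [b y] [c H]. exists c. intuition.
  - intros [a x] [b y] [d z] Hxy Hyz.
    destruct (exists_fresh [a; b; d] [x; y; z]) as [c [Hc Hf]]; simpl in Hc.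
    assert (fresh act c x) by (apply Hf; simpl; auto).
    assert (fresh act c y) by (apply Hf; simpl; auto).
    assert (fresh act c z) by (apply Hf; simpl; auto).
    exists c. repeat split; try (intros ->; tauto); auto.
    rewrite (abs_rel_any_fresh a x b y c), (abs_rel_any_fresh b y d z c); auto.
Qed.

#[local] Existing Instance abs_rel_equivalence.

Lemma abs_cls_eq_iff a x b y : abs_cls act a x = abs_cls act b y <-> abs_rel act (a, x) (b, y).
Proof. split; [apply cls_inj | apply cls_eq]; typeclasses eauto. Qed.

Lemma rep_abs_cls a x : abs_rel act (rep (abs_cls act a x)) (a, x).
Proof. apply rep_cls; typeclasses eauto. Qed.

Lemma abs_cls_pswap a c x : fresh act c x -> abs_cls act a x = abs_cls act c (act (pswap a c) x).
Proof.
  intro Hc. apply abs_cls_eq_iff.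
  destruct (exists_fresh [a; c] [x; act (pswap a c) x]) as [e [He Hf]]; simpl in He.
  exists e. repeat split; try (intros ->; tauto); try (apply Hf; simpl; auto).
  apply act_pswap_rename; auto. apply Hf; simpl; auto.
Qed.

Lemma fresh_act p c x : fresh act c x -> fresh act (pf p c) (act p x).
Proof.
  intros [S [HS Hc]]. apply (fresh_of_supports (map (pf p) S)).
  - apply supports_act, HS.
  - rewrite in_map_iff. intros [c' [E Hc']]. apply pf_inj in E. subst. auto.
Qed.

Lemma abs_rel_act p a x b y : abs_rel act (a, x) (b, y) ->
  abs_rel act (pf p a, act p x) (pf p b, act p y).
Proof.
  intros [c (Hca & Hcb & Fx & Fy & E)]. exists (pf p c).
  repeat split; try (intro H; apply pf_inj in H; auto); try (apply fresh_act; auto).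
  rewrite <- !act_pcomp, !pswap_conj, !act_pcomp, E. reflexivity.
Qed.

Lemma actF_abs_cls p a x :
  actF act p (inr (abs_cls act a x)) = inr (abs_cls act (pf p a) (act p x)).
Proof.
  unfold actF. generalize (rep_abs_cls a x).
  destruct (rep (abs_cls act a x)) as [b y]. intro H.
  f_equal. apply abs_cls_eq_iff, abs_rel_act, H.
Qed.

End Nominal.

Section Equivariant.
Context {X Y : Type} (actX : perm -> X -> X) (actY : perm -> Y -> Y).
Hypotheses (HX : is_nominal actX) (HY : is_nominal actY).
Variable h : X -> Y.
Hypothesis Hh : equivariant actX actY h.

Lemma fresh_equivariant c x : fresh actX c x -> fresh actY c (h x).
Proof.
  intros [S [HS Hc]]. apply (fresh_of_supports actY HY S); [|exact Hc].
  intros p Hp. rewrite <- Hh, (proj1 HS); auto.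
Qed.

Lemma abs_cls_equivariant a x b y :
  abs_cls actX a x = abs_cls actX b y -> abs_cls actY a (h x) = abs_cls actY b (h y).
Proof.
  rewrite (abs_cls_eq_iff actX HX), (abs_cls_eq_iff actY HY).
  intros [c (Hca & Hcb & Fx & Fy & E)]. exists c.
  repeat split; auto using fresh_equivariant. rewrite <- !Hh, E. reflexivity.
Qed.

Lemma Fmap_abs_cls a x : Fmap actX actY h (inr (abs_cls actX a x)) = inr (abs_cls actY a (h x)).
Proof.
  unfold Fmap. generalize (rep_abs_cls actX HX a x).
  destruct (rep (abs_cls actX a x)) as [b y]. intro H.
  f_equal. apply abs_cls_equivariant, abs_cls_eq_iff; auto.
Qed.

End Equivariant.

Definition lname (l : barletter) : nat := match l with Nm a | Bd a => a end.

Definition atoms (w : list barletter) : list nat := map lname w.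

Fixpoint fn (w : list barletter) : list nat :=
  match w with
  | [] => []
  | Nm a :: u => a :: fn u
  | Bd a :: u => filter (fun x => negb (Nat.eqb x a)) (fn u)
  end.

Lemma atoms_wact p w : atoms (wact p w) = map (pf p) (atoms w).
Proof. unfold atoms, wact. rewrite !map_map. apply map_ext. intros [a|a]; reflexivity. Qed.

Lemma wact_pid w : wact pid w = w.
Proof. induction w as [|[a|a] w IH]; simpl; f_equal; auto. Qed.

Lemma wact_pcomp p q w : wact (pcomp p q) w = wact p (wact q w).
Proof. induction w as [|[a|a] w IH]; simpl; f_equal; auto. Qed.

Lemma wact_agree p q w : (forall a, In a (atoms w) -> pf p a = pf q a) -> wact p w = wact q w.
Proof. induction w as [|[a|a] w IH]; simpl; intro H; f_equal; auto; rewrite H; auto. Qed.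

Lemma atoms_least_supp w : least_supp wact (atoms w) w.
Proof.
  apply least_supp_intro.
  - intros p Hp. rewrite <- (wact_pid w) at 2. apply wact_agree. exact Hp.
  - intros a b Ha Hb E. apply Hb. rewrite <- E, atoms_wact, in_map_iff.
    exists a. split; [apply swapf_l | exact Ha].
Qed.

Lemma wact_nominal : is_nominal wact.
Proof.
  split; [exact wact_pid|split; [exact wact_pcomp|]].
  intro w; exists (atoms w); apply atoms_least_supp.
Qed.

Lemma fresh_wact_iff c w : fresh wact c w <-> ~ In c (atoms w).
Proof. apply fresh_iff_least_supp, atoms_least_supp. Qed.

Lemma In_fn_Bd a u z : In z (fn (Bd a :: u)) <-> z <> a /\ In z (fn u).
Proof.
  simpl. rewrite filter_In.
  destruct (Nat.eqb_spec z a) as [->|]; simpl; split; intros [H1 H2]; auto; try discriminate; congruence.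
Qed.

Lemma fn_incl_atoms w : incl (fn w) (atoms w).
Proof.
  induction w as [|[a|a] w IH]; intros z Hz; simpl in Hz; [exact Hz| |].
  - destruct Hz as [->|Hz]; [left; reflexivity | right; apply IH, Hz].
  - rewrite filter_In in Hz. right; apply IH, Hz.
Qed.

Lemma In_fn_wact p w z : In (pf p z) (fn (wact p w)) <-> In z (fn w).
Proof.
  induction w as [|[a|a] w IH]; [reflexivity| |].
  - simpl. rewrite IH.
    split; intros [H|H]; auto. left; apply pf_inj in H; exact H.
  - change (In (pf p z) (fn (Bd (pf p a) :: wact p w)) <-> In z (fn (Bd a :: w))).
    rewrite !In_fn_Bd, IH.
    split; intros [H1 H2]; (split; [intro H; apply H1 | exact H2]); [congruence | exact (pf_inj p _ _ H)].
Qed.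

Lemma In_fn_pswap a c w z : In z (fn (wact (pswap a c) w)) <-> In (swapf a c z) (fn w).
Proof.
  rewrite <- (In_fn_wact (pswap a c) w (swapf a c z)). simpl. rewrite swapfK. reflexivity.
Qed.

Lemma fn_Bd_pswap a c v : ~ In c (fn v) ->
  forall z, In z (fn (Bd c :: wact (pswap a c) v)) <-> In z (fn (Bd a :: v)).
Proof.
  intros Hc z. rewrite !In_fn_Bd, In_fn_pswap.
  destruct (Nat.eq_dec z c) as [->|Hzc]; [split; intros [H1 H2]; tauto|].
  destruct (Nat.eq_dec z a) as [->|Hza].
  - rewrite swapf_l. tauto.
  - rewrite swapf_other by assumption. tauto.
Qed.

Lemma fn_app_cong x y1 y2 : (forall z, In z (fn y1) <-> In z (fn y2)) ->
  forall z, In z (fn (x ++ y1)) <-> In z (fn (x ++ y2)).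
Proof.
  intro H. induction x as [|[a|a] x IH]; simpl; auto.
  - intro z; rewrite IH; reflexivity.
  - intro z; rewrite !filter_In, IH; reflexivity.
Qed.

#[export] Instance alpha_eq_equivalence : Equivalence alpha_eq.
Proof.
  split; intro; [apply rst_refl | intro; apply rst_sym | intros ? ?; apply rst_trans].
Qed.

Lemma alpha_eq_respectful {Z : Type} (R : relation Z) `{Equivalence Z R}
  (g : list barletter -> Z) :
  (forall u v, alpha_step u v -> R (g u) (g v)) -> forall u v, alpha_eq u v -> R (g u) (g v).
Proof.
  intros Hg u v Huv.
  induction Huv; [auto | reflexivity | symmetry; auto | etransitivity; eauto].
Qed.

Lemma alpha_app x u v : alpha_eq u v -> alpha_eq (x ++ u) (x ++ v).
Proof.
  apply (alpha_eq_respectful alpha_eq (app x)). clear u v.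
  intros u v (y & a & b & v' & w' & -> & -> & E). apply rst_step.
  exists (x ++ y), a, b, v', w'. rewrite <- !app_assoc. auto.
Qed.

Lemma alpha_cons l u v : alpha_eq u v -> alpha_eq (l :: u) (l :: v).
Proof. apply (alpha_app [l]). Qed.

Lemma alpha_wact p u v : alpha_eq u v -> alpha_eq (wact p u) (wact p v).
Proof.
  apply (alpha_eq_respectful alpha_eq (wact p)). clear u v.
  intros u v (y & a & b & v' & w' & -> & -> & E). apply rst_step.
  exists (wact p y), (pf p a), (pf p b), (wact p v'), (wact p w').
  split; [apply map_app|split; [apply map_app|]].
  apply (abs_cls_eq_iff wact wact_nominal), abs_rel_act, abs_cls_eq_iff; auto using wact_nominal.
Qed.

Lemma fn_alpha u v : alpha_eq u v -> forall z, In z (fn u) <-> In z (fn v).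
Proof.
  intros Huv z. revert u v Huv. apply (alpha_eq_respectful iff (fun w => In z (fn w))).
  intros u v (x & a & b & v' & w' & -> & -> & E). revert z. apply fn_app_cong.
  apply (abs_cls_eq_iff wact wact_nominal) in E as (c & _ & _ & Fv & Fw & E).
  rewrite fresh_wact_iff in Fv, Fw. intro z.
  rewrite <- (fn_Bd_pswap a c v'), <- (fn_Bd_pswap b c w'), E; [reflexivity| |];
    intro; [apply Fw | apply Fv]; apply fn_incl_atoms; assumption.
Qed.

Lemma alpha_Bd_pswap_atoms a c u : ~ In c (atoms u) ->
  alpha_eq (Bd a :: u) (Bd c :: wact (pswap a c) u).
Proof.
  intro Hc. apply rst_step. exists [], a, c, u, (wact (pswap a c) u).
  split; [reflexivity|split; [reflexivity|]].
  apply abs_cls_pswap; [exact wact_nominal|]. apply fresh_wact_iff, Hc.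
Qed.

Lemma alpha_supports w : forall p, (forall a, In a (fn w) -> pf p a = a) -> alpha_eq (wact p w) w.
Proof.
  induction w as [|[a|a] u IH]; intros p Hp; [reflexivity| |].
  - simpl in Hp. change (alpha_eq (Nm (pf p a) :: wact p u) (Nm a :: u)).
    rewrite Hp by (left; reflexivity). apply alpha_cons, IH. auto.
  - change (alpha_eq (Bd (pf p a) :: wact p u) (Bd a :: u)).
    destruct (exists_fresh_nat (a :: pf p a :: atoms u ++ atoms (wact p u))) as [c Hc].
    simpl in Hc. rewrite in_app_iff in Hc.
    (* After renaming the binder through c, p acts on u as q, which fixes the free names of u. *)
    pose (q := pcomp (pswap a c) (pcomp (pswap (pf p a) c) p)).
    assert (Hq : forall y, In y (fn u) -> pf q y = y).
    { intros y Hy. assert (y <> c) by (intros ->; apply Hc; right; right; left; apply fn_incl_atoms, Hy).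
      unfold q; simpl. destruct (Nat.eq_dec y a) as [->|Hya].
      - rewrite swapf_l. apply swapf_r.
      - assert (E : pf p y = y) by (apply Hp, In_fn_Bd; auto). rewrite E.
        assert (y <> pf p a) by (intros E'; apply Hya, (pf_inj p); congruence).
        rewrite (swapf_other (pf p a) c y), (swapf_other a c y); auto. }
    transitivity (Bd c :: wact (pswap (pf p a) c) (wact p u)).
    { apply alpha_Bd_pswap_atoms. tauto. }
    transitivity (Bd c :: wact (pswap a c) u); [|symmetry; apply alpha_Bd_pswap_atoms; tauto].
    apply alpha_cons.
    replace (wact (pswap (pf p a) c) (wact p u)) with (wact (pswap a c) (wact q u)).
    + apply alpha_wact, IH, Hq.
    + rewrite <- !wact_pcomp. apply wact_agree. intros y _. unfold q; simpl. apply swapfK.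
Qed.

Lemma alpha_Bd_pswap a c v : ~ In c (fn v) -> alpha_eq (Bd a :: v) (Bd c :: wact (pswap a c) v).
Proof.
  intro Hc. symmetry.
  replace (Bd c :: wact (pswap a c) v) with (wact (pswap a c) (Bd a :: v))
    by (simpl; rewrite swapf_l; reflexivity).
  apply alpha_supports. intros y Hy. apply In_fn_Bd in Hy as [Hya Hy].
  apply swapf_other; [exact Hya | intros ->; contradiction].
Qed.

Lemma alpha_Bd_common_fresh a v b w c : ~ In c (fn v) -> ~ In c (fn w) ->
  alpha_eq (wact (pswap a c) v) (wact (pswap b c) w) -> alpha_eq (Bd a :: v) (Bd b :: w).
Proof.
  intros Hv Hw E. rewrite (alpha_Bd_pswap a c v Hv), (alpha_Bd_pswap b c w Hw).
  apply alpha_cons, E.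
Qed.

Lemma bcls_eq_iff u v : bcls u = bcls v <-> alpha_eq u v.
Proof. split; [apply cls_inj | apply cls_eq]; typeclasses eauto. Qed.

Lemma rep_bcls w : alpha_eq (rep (bcls w)) w.
Proof. apply rep_cls; typeclasses eauto. Qed.

Lemma bcls_surj (c : BarQ) : exists w, c = bcls w.
Proof. exists (rep c). symmetry. apply cls_rep. Qed.

Lemma BarQ_act_bcls p w : BarQ_act p (bcls w) = bcls (wact p w).
Proof. apply bcls_eq_iff, alpha_wact, rep_bcls. Qed.

Lemma fn_least_supp w : least_supp BarQ_act (fn w) (bcls w).
Proof.
  apply least_supp_intro.
  - intros p Hp. rewrite BarQ_act_bcls. apply bcls_eq_iff, alpha_supports, Hp.
  - intros a b Ha Hb E. rewrite BarQ_act_bcls, bcls_eq_iff in E.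
    apply Hb, (fn_alpha _ _ E), In_fn_pswap. rewrite swapf_r. exact Ha.
Qed.

Lemma BarQ_nominal : is_nominal BarQ_act.
Proof.
  split; [|split]; intros; repeat match goal with c : BarQ |- _ => destruct (bcls_surj c) as [? ->] end.
  - rewrite BarQ_act_bcls, wact_pid. reflexivity.
  - rewrite !BarQ_act_bcls, wact_pcomp. reflexivity.
  - eexists. apply fn_least_supp.
Qed.

Lemma fresh_bcls_iff c w : fresh BarQ_act c (bcls w) <-> ~ In c (fn w).
Proof. apply fresh_iff_least_supp, fn_least_supp. Qed.

Lemma abs_rel_bcls a v b w :
  abs_rel BarQ_act (a, bcls v) (b, bcls w) -> alpha_eq (Bd a :: v) (Bd b :: w).
Proof.
  intros (c & _ & _ & Fv & Fw & E). rewrite fresh_bcls_iff in Fv, Fw.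
  rewrite !BarQ_act_bcls, bcls_eq_iff in E. exact (alpha_Bd_common_fresh a v b w c Fv Fw E).
Qed.

Lemma iota_Nm a w : iota (inl (inr (a, bcls w))) = bcls (Nm a :: w).
Proof. apply bcls_eq_iff, alpha_cons, rep_bcls. Qed.

Lemma iota_Bd a w : iota (inr (abs_cls BarQ_act a (bcls w))) = bcls (Bd a :: w).
Proof.
  unfold iota. generalize (rep_abs_cls BarQ_act BarQ_nominal a (bcls w)).
  destruct (rep (abs_cls BarQ_act a (bcls w))) as [b c]. intro H.
  destruct (bcls_surj c) as [v ->]. apply bcls_eq_iff.
  transitivity (Bd b :: v); [apply alpha_cons, rep_bcls | apply abs_rel_bcls, H].
Qed.

Lemma iota_equivariant : equivariant (actF BarQ_act) BarQ_act iota.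
Proof.
  intros p [[[]|[a c]]|d].
  - change (bcls [] = BarQ_act p (bcls [])). rewrite BarQ_act_bcls. reflexivity.
  - destruct (bcls_surj c) as [w ->].
    simpl actF. rewrite BarQ_act_bcls, !iota_Nm, BarQ_act_bcls. reflexivity.
  - destruct (abs_cls_surj BarQ_act d) as [a [c ->]]. destruct (bcls_surj c) as [w ->].
    rewrite actF_abs_cls, BarQ_act_bcls, !iota_Bd, BarQ_act_bcls by exact BarQ_nominal.
    reflexivity.
Qed.

Section Initiality.
Context {Y : Type} (actY : perm -> Y -> Y) (beta : FT Y actY -> Y).
Hypotheses (HY : is_nominal actY) (Hbeta : equivariant (actF actY) actY beta).

Fixpoint bar_fold (w : list barletter) : Y :=
  match w with
  | [] => beta (inl (inl tt))
  | Nm a :: u => beta (inl (inr (a, bar_fold u)))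
  | Bd a :: u => beta (inr (abs_cls actY a (bar_fold u)))
  end.

Lemma bar_fold_equivariant : equivariant wact actY bar_fold.
Proof.
  intros p w. induction w as [|[a|a] u IH]; simpl; rewrite ?IH, <- Hbeta; [reflexivity..|].
  rewrite actF_abs_cls by exact HY. reflexivity.
Qed.

Lemma bar_fold_app x y1 y2 : bar_fold y1 = bar_fold y2 -> bar_fold (x ++ y1) = bar_fold (x ++ y2).
Proof. intro H. induction x as [|[a|a] x IH]; simpl; rewrite ?IH; assumption || reflexivity. Qed.

Lemma bar_fold_alpha u v : alpha_eq u v -> bar_fold u = bar_fold v.
Proof.
  apply (alpha_eq_respectful eq). clear u v.
  intros u v (x & a & b & v' & w' & -> & -> & E). apply bar_fold_app. simpl. do 2 f_equal.
  exact (abs_cls_equivariant wact actY wact_nominal HY bar_fold bar_fold_equivariant a v' b w' E).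
Qed.

Definition barq_fold (c : BarQ) : Y := bar_fold (rep c).

Lemma barq_fold_bcls w : barq_fold (bcls w) = bar_fold w.
Proof. apply bar_fold_alpha, rep_bcls. Qed.

Lemma barq_fold_equivariant : equivariant BarQ_act actY barq_fold.
Proof.
  intros p c. destruct (bcls_surj c) as [w ->].
  rewrite BarQ_act_bcls, !barq_fold_bcls. apply bar_fold_equivariant.
Qed.

Lemma barq_fold_Fhom : is_Fhom BarQ_act actY iota beta barq_fold.
Proof.
  intros [[[]|[a c]]|d].
  - apply barq_fold_bcls.
  - destruct (bcls_surj c) as [w ->].
    rewrite iota_Nm, barq_fold_bcls. simpl. rewrite barq_fold_bcls. reflexivity.
  - destruct (abs_cls_surj BarQ_act d) as [a [c ->]]. destruct (bcls_surj c) as [w ->].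
    rewrite iota_Bd, barq_fold_bcls, Fmap_abs_cls, barq_fold_bcls;
      auto using BarQ_nominal, barq_fold_equivariant.
Qed.

Lemma Fhom_barq_unique h : equivariant BarQ_act actY h -> is_Fhom BarQ_act actY iota beta h ->
  forall c, h c = barq_fold c.
Proof.
  intros Eh Fh c. destruct (bcls_surj c) as [w ->]. rewrite barq_fold_bcls.
  induction w as [|[a|a] u IH].
  - exact (Fh (inl (inl tt))).
  - rewrite <- iota_Nm, Fh. simpl. rewrite IH. reflexivity.
  - rewrite <- iota_Bd, Fh, Fmap_abs_cls, IH; auto using BarQ_nominal.
Qed.

End Initiality.

Theorem proposition3p19 :
  (* the action and iota are well defined by the stated equations *)
  (forall p w, BarQ_act p (bcls w) = bcls (wact p w)) /\
  iota (inl (inl tt)) = bcls nil /\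
  (forall a w, iota (inl (inr (a, bcls w))) = bcls (Nm a :: w)) /\
  (forall a w, iota (inr (abs_cls BarQ_act a (bcls w))) = bcls (Bd a :: w)) /\
  (* (Abar*/=alpha, iota) is the initial F-algebra in Nom *)
  is_initial_Falg BarQ_act iota.
Proof.
  split; [exact BarQ_act_bcls|]. split; [reflexivity|].
  split; [exact iota_Nm|]. split; [exact iota_Bd|].
  split; [exact BarQ_nominal|]. split; [exact iota_equivariant|].
  intros Y actY beta HY Hbeta. exists (barq_fold actY beta).
  split; [exact (barq_fold_equivariant actY beta HY Hbeta)|].
  split; [exact (barq_fold_Fhom actY beta HY Hbeta)|].
  exact (Fhom_barq_unique actY beta HY Hbeta).
Qed.
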